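(* Under the standing assumptions and definitions in the context, let $\mathbf{x}^*\in\Gamma$ be a fixed point of the convex feasible set iteration, i.e., $\mathbf{x}^*=\arg\min_{\mathbf{x}\in\mathcal{F}(\mathbf{x}^* )}J(\mathbf{x})$. Then $\mathbf{x}^*$ is a strong local optimum of $\min_{\mathbf{x}\in\Gamma}J(\mathbf{x})$, i.e., $\nabla J(\mathbf{x}^* )\cdot v\ge0$ for all $v\in C(\mathbf{x}^* )$.
   Context: Problem: minimize $J(\mathbf{x})$ over $\mathbf{x}\in\Gamma\subset\mathbb{R}^n$, where (i) $J:\mathbb{R}^n\to\mathbb{R}^+$ is smooth and strictly convex; (ii) $\Gamma$ is connected and closed with piecewise smooth, non-self-intersecting boundary, and every point of $\Gamma$ lies in some $n$-dimensional convex polytope contained in $\Gamma$. Semi-convex decomposition: $\Gamma=\bigcap_{i=1}^N\Gamma_i$, $\Gamma_i=\{\mathbf{x}:\phi_i(\mathbf{x})\ge 0\}$, $\partial\Gamma_i=\{\mathbf{x}:\phi_i(\mathbf{x})=0\}$, where each $\phi_i:\mathbb{R}^n\to\mathbb{R}$ is continuous, piecewise smooth and semi-convex: there is a positive semidefinite $H_i^*$ such that $\mathbf{x}\mapsto\phi_i(\mathbf{x})+\frac12(\mathbf{x}-\mathbf{x}_0)^TH_i^*(\mathbf{x}-\mathbf{x}_0)$ is convex for every $\mathbf{x}_0$. One-sided directional derivative: $\partial_v\phi_i(\mathbf{x})=\lim_{a\to0^+}(\phi_i(\mathbf{x}+av)-\phi_i(\mathbf{x}))/a$. Sub-differential: $D\phi_i(\mathbf{x})=\{d\in\mathbb{R}^n: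 d\cdot v\le\partial_v\phi_i(\mathbf{x})\ \forall v\in\mathbb{R}^n\}$. It is assumed that: (1) $D\phi_i(\mathbf{x})\neq\{0\}$ for all $\mathbf{x}$; (2) $0\notin D\phi_i(\mathbf{x})$ if $\mathbf{x}\in\partial\Gamma_i$; (3) for any $\mathbf{x}$ with $I:=\{i:\phi_i(\mathbf{x})=0\}\ne\emptyset$ there is $v$ with $\partial_v\phi_i(\mathbf{x})<0$ for all $i\in I$. Feasible directions and optimal sub-gradients at a reference $\mathbf{x}^r$: a unit vector $v$ is a feasible search direction if for every $i$: $\phi_i(\mathbf{x}^r)>0$; or $\phi_i(\mathbf{x}^r)=0$ and some $d\in D\phi_i(\mathbf{x}^r)$ has $v\cdot d\ge0$; or $\phi_i(\mathbf{x}^r)<0$ and some $d\in D\phi_i(\mathbf{x}^r)$ has $v\cdot d>0$. Let $C(\mathbf{x}^r)$ be the set of these, and $v^*=\arg\min_{v\in C(\mathbf{x}^r)}\nabla J(\mathbf{x}^r)\cdot v$ (ties broken lexicographically by smallest first entry, then second, etc.). Let $DF_i=D\phi_i(\mathbf{x}^r)$ if $\phi_i(\mathbf{x}^r)>0$, $DF_i=\{d\in D\phi_i(\mathbf{x}^r):d\cdot v^*\ge0\}$ if $\phi_i(\mathbf{x}^r)=0$, $DF_i=\{d\in D\phi_i(\mathbf{x}^r):d\cdot v^*>0\}$ if $\phi_i(\mathbf{x}^r)<0$, and $\hat\nabla\phi_i(\mathbf{x}^r)=\arg\min_{d\in DF_i}\nabla J(\mathbf{x}^r)\cdot d/\|d\|$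 (with $d/\|d\|:=0$ if $d=0$). Convex feasible set: $\mathcal{F}_i(\mathbf{x}^r)=\Gamma_i$ if $\phi_i$ is concave; $\mathcal{F}_i(\mathbf{x}^r)=\{\mathbf{x}:\phi_i(\mathbf{x}^r)+\hat\nabla\phi_i(\mathbf{x}^r)(\mathbf{x}-\mathbf{x}^r)\ge0\}$ if $\phi_i$ is convex; $\mathcal{F}_i(\mathbf{x}^r)=\{\mathbf{x}:\phi_i(\mathbf{x}^r)+\hat\nabla\phi_i(\mathbf{x}^r)(\mathbf{x}-\mathbf{x}^r)\ge\frac12(\mathbf{x}-\mathbf{x}^r)^TH_i^*(\mathbf{x}-\mathbf{x}^r)\}$ otherwise; $\mathcal{F}(\mathbf{x}^r)=\bigcap_{i=1}^N\mathcal{F}_i(\mathbf{x}^r)$. *)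

(* R^n is modelled as row vectors 'rV[R]_n
   over an arbitrary R : realType. *)
From HB Require Import structures.
From mathcomp Require Import all_boot all_order all_algebra.
From mathcomp Require Import all_classical all_reals all_analysis.
Set Implicit Arguments. Unset Strict Implicit. Unset Printing Implicit Defensive.
Import Order.TTheory GRing.Theory Num.Theory.
Import numFieldNormedType.Exports.
Local Open Scope classical_set_scope.
Local Open Scope ring_scope.

Section Defs.
Variables (R : realType) (n : nat).
Local Notation V := 'rV[R]_n.

Definition dot (u v : V) : R := \sum_(k < n) u ord0 k * v ord0 k.
Definition enorm (u : V) : R := Num.sqrt (dot u u).

Definition qform (H : 'M[R]_n) (u : V) : R := (u *m H *m u^T) ord0 ord0.

Definition psd (H : 'M[R]_n) : Prop := H^T = H /\ forall u : V, 0 <= qform H u.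

Definition grad (f : V -> R) (x : V) : V := \row_k ('d f x (delta_mx ord0 k) : R).

Definition convex_fun (f : V -> R) : Prop :=
  forall x y (t : R), 0 <= t <= 1 ->
    f (t *: x + (1 - t) *: y) <= t * f x + (1 - t) * f y.
Definition concave_fun (f : V -> R) : Prop := convex_fun (fun x => - f x).
Definition strictly_convex_fun (f : V -> R) : Prop :=
  forall x y (t : R), x != y -> 0 < t < 1 ->
    f (t *: x + (1 - t) *: y) < t * f x + (1 - t) * f y.

Fixpoint Ck (k : nat) (f : V -> R) : Prop :=
  match k with
  | 0%N => continuous f
  | k'.+1 => (forall x, differentiable f x) /\ forall v : V, Ck k' ('D_v f)
  end.
Definition smooth (f : V -> R) : Prop := forall k, Ck k f.

Definition piecewise_smooth (f : V -> R) : Prop :=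
  continuous f /\
  exists (m : nat) (g : 'I_m -> V -> R),
    (forall j, smooth (g j)) /\ forall x, exists j, f x = g j x.

Definition semi_convex_with (f : V -> R) (H : 'M[R]_n) : Prop :=
  psd H /\ forall x0 : V, convex_fun (fun x => f x + 2^-1 * qform H (x - x0)).

Definition dirder_is (f : V -> R) (x v : V) (l : R) : Prop :=
  (fun a : R => (f (x + a *: v) - f x) / a) @ 0^'+ --> l.

Definition subdiff (f : V -> R) (x : V) : set V :=
  [set d | forall v : V, exists l, dirder_is f x v l /\ dot d v <= l].

Definition bdry (A : set V) : set V := closure A `\` interior A.

Definition polytope (s : seq V) : set V :=
  [set x | exists w : 'I_(size s) -> R,
     (forall k, 0 <= w k) /\ \sum_k w k = 1 /\ x = \sum_k w k *: s`_(val k)].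

Definition lex_le (u v : V) : Prop :=
  u = v \/ exists k : 'I_n, (forall j : 'I_n, (j < k)%N -> u ord0 j = v ord0 j)
                            /\ u ord0 k < v ord0 k.

Section Iteration.
Variables (N : nat) (phi : 'I_N -> V -> R) (H : 'I_N -> 'M[R]_n) (J : V -> R).

Definition Gamma_i (i : 'I_N) : set V := [set x | 0 <= phi i x].
Definition Gamma : set V := \bigcap_(i in setT) Gamma_i i.

Definition feasible_dirs (xr : V) : set V :=
  [set v | enorm v = 1 /\ forall i,
     0 < phi i xr \/
     (phi i xr = 0 /\ exists2 d, subdiff (phi i) xr d & 0 <= dot v d) \/
     (phi i xr < 0 /\ exists2 d, subdiff (phi i) xr d & 0 < dot v d)].

Definition is_vstar (xr vs : V) : Prop :=
  feasible_dirs xr vs /\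
  (forall v, feasible_dirs xr v -> dot (grad J xr) vs <= dot (grad J xr) v) /\
  (forall v, feasible_dirs xr v -> dot (grad J xr) v = dot (grad J xr) vs ->
     lex_le vs v).

Definition DF (xr vs : V) (i : 'I_N) : set V :=
  [set d | subdiff (phi i) xr d /\
     (0 < phi i xr \/ (phi i xr = 0 /\ 0 <= dot d vs)
                   \/ (phi i xr < 0 /\ 0 < dot d vs))].

(* d / ||d||, with the convention 0 / ||0|| := 0 *)
Definition normalize (d : V) : V := if d == 0 then 0 else (enorm d)^-1 *: d.

Definition is_opt_subgrad (xr vs : V) (i : 'I_N) (g : V) : Prop :=
  DF xr vs i g /\
  forall d, DF xr vs i d ->
    dot (grad J xr) (normalize g) <= dot (grad J xr) (normalize d).

Definition F_i (xr : V) (i : 'I_N) (g : V) : set V :=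
  [set x |
     (concave_fun (phi i) -> 0 <= phi i x) /\
     (~ concave_fun (phi i) -> convex_fun (phi i) ->
        0 <= phi i xr + dot g (x - xr)) /\
     (~ concave_fun (phi i) -> ~ convex_fun (phi i) ->
        2^-1 * qform (H i) (x - xr) <= phi i xr + dot g (x - xr))].

Definition Fset (xr : V) (g : 'I_N -> V) : set V :=
  \bigcap_(i in setT) F_i xr i (g i).

End Iteration.
End Defs.

From mathcomp Require Import all_boot all_order all_algebra.
From mathcomp Require Import all_classical all_reals all_analysis.
From mathcomp Require Import lra.
Set Implicit Arguments. Unset Strict Implicit. Unset Printing Implicit Defensive.
Import Order.TTheory GRing.Theory Num.Theory.
Import numFieldNormedType.Exports.
Local Open Scope classical_set_scope.
Local Open Scope ring_scope.

(* Suppose grad J xs . v < 0 for some v in C xs; then grad J xs . vs < 0 too,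
   vs being the optimal direction.  Tilting vs away from the direction u of
   assumption (3) gives w = vs - eps u with grad J xs . w < 0 and
   ghat_i . w > 0 for every active constraint.  For small a > 0 the point
   xs + a w then lies in F xs: active constraints have positive slope along w,
   inactive ones have slack, and either beats the quadratic term of F_i.  Yet
   J (xs + a w) < J xs, contradicting the fixed-point property. *)

Section QuadraticNearZero.
Variable R : realType.

Lemma quadratic_cvg0 (b k : R) : (fun a : R => a * b + a ^+ 2 * k) @ 0^'+ --> 0.
Proof.
apply: cvg_at_right_filter.
rewrite -[X in _ --> X](_ : 0 * b + 0 ^+ 2 * k = 0); last by rewrite expr0n !mul0r addr0.
by apply: cvgD; apply: cvgMr_tmp; [exact: cvg_id | rewrite expr2; exact: cvgM].
Qed.

Lemma near0_quadratic_lt (c b k : R) : 0 < c ->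
  \forall a \near 0^'+, a * b + a ^+ 2 * k < c.
Proof. exact: cvgr_lt (quadratic_cvg0 b k) c. Qed.

Lemma near0_quadratic_le (c b k : R) : 0 < c \/ (c = 0 /\ 0 < b) ->
  \forall a \near 0^'+, a ^+ 2 * k <= c + a * b.
Proof.
case=> [c0 | [-> b0]]; near=> a.
  have : a * - b + a ^+ 2 * k < c by near: a; exact: near0_quadratic_lt.
  lra.
have a0 : 0 < a by near: a; exact: nbhs_right_gt.
have : a * k + a ^+ 2 * 0 < b by near: a; exact: near0_quadratic_lt.
rewrite mulr0 addr0 add0r expr2 -mulrA => akb.
by rewrite ler_pM2l // ltW.
Unshelve. all: by end_near. Qed.

End QuadraticNearZero.

Section Rays.
Variables (R : realType) (n : nat).
Local Notation V := 'rV[R]_n.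

Lemma dotDr (u v w : V) : dot u (v + w) = dot u v + dot u w.
Proof. by rewrite /dot -big_split; apply: eq_bigr => k _; rewrite mxE mulrDr. Qed.

Lemma dotZr (u v : V) a : dot u (a *: v) = a * dot u v.
Proof. by rewrite /dot mulr_sumr; apply: eq_bigr => k _; rewrite mxE mulrCA. Qed.

Lemma dotBr (u v w : V) : dot u (v - w) = dot u v - dot u w.
Proof. by rewrite dotDr -scaleN1r dotZr mulN1r. Qed.

Lemma qformZ (H : 'M[R]_n) (w : V) a : qform H (a *: w) = a ^+ 2 * qform H w.
Proof.
rewrite /qform -!scalemxAl linearZ /= -scalemxAr.
by rewrite !mxE mulrA expr2.
Qed.

Lemma dot_grad (J : V -> R) x w : dot (grad J x) w = 'd J x w.
Proof.
rewrite {2}(row_sum_delta w) linear_sum /dot; apply: eq_bigr => k _.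
by rewrite linearZ /= mxE mulrC.
Qed.

Lemma dirder_unique (f : V -> R) x v l l' :
  dirder_is f x v l -> dirder_is f x v l' -> l = l'.
Proof. exact: (cvg_unique (@norm_hausdorff _ R^o)). Qed.

Lemma subdiff_dot_le (f : V -> R) x v d l :
  subdiff f x d -> dirder_is f x v l -> dot d v <= l.
Proof. by move=> /(_ v) [l' [fl' dl']] fl; rewrite (dirder_unique fl fl'). Qed.

Lemma near_ray_gt_dirder (f : V -> R) x w l : dirder_is f x w l -> 0 < l ->
  \forall a \near 0^'+, f x < f (x + a *: w).
Proof.
move=> fl l0; near=> a.
have a0 : 0 < a by near: a; exact: nbhs_right_gt.
have : 0 < (f (x + a *: w) - f x) / a by near: a; exact: cvgr_gt fl 0 l0.
by rewrite pmulr_lgt0 ?invr_gt0 // subr_gt0.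
Unshelve. all: by end_near. Qed.

Lemma near_ray_gt_cont (f : V -> R) x w y : {for x, continuous f} -> y < f x ->
  \forall a \near 0^'+, y < f (x + a *: w).
Proof.
move=> fx yx.
have ray : (fun a : R => x + a *: w) @ 0^'+ --> x.
  apply: cvg_at_right_filter; rewrite -[X in _ --> X]addr0 -(scale0r w).
  by apply: cvgD; [exact: cvg_cst | apply: cvgZr_tmp; exact: cvg_id].
exact: cvgr_gt (cvg_comp _ _ ray fx) y yx.
Qed.

Lemma near_ray_lt_grad (J : V -> R) x w :
  differentiable J x -> dot (grad J x) w < 0 ->
  \forall a \near 0^'+, J (x + a *: w) < J x.
Proof.
move=> dJ gw.
have quot : (fun h : R => h^-1 *: ((J \o shift x) (h *: w) - J x)) @ 0^'
    --> dot (grad J x) w.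
  by rewrite dot_grad -deriveE //; exact: diff_derivable.
move: (@cvgr_lt _ _ _ (dnbhs_filter _) _ _ quot 0 gw).
rewrite !near_withinE; apply: filterS => a qa a0.
move: (qa (lt0r_neq0 a0)) => /=.
by rewrite pmulr_rlt0 ?invr_gt0 // [a *: w + x]addrC subr_lt0.
Qed.

Lemma exists_dot_perturb_lt0 (g v u : V) : dot g v < 0 ->
  exists2 eps, 0 < eps & dot g (v - eps *: u) < 0.
Proof.
move=> gv.
have small_eps : \forall eps \near 0^'+,
    0 < eps /\ eps * - dot g u + eps ^+ 2 * 0 < - dot g v.
  near=> eps; split; near: eps; first exact: nbhs_right_gt.
  by apply: near0_quadratic_lt; rewrite oppr_gt0.
have [eps [eps0 small]] := filter_ex small_eps.
by exists eps => //; rewrite dotBr dotZr; lra.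
Unshelve. all: by end_near. Qed.

End Rays.

Section ConvexFeasibleSet.
Variables (R : realType) (n N : nat).
Variables (phi : 'I_N -> 'rV[R]_n -> R) (H : 'I_N -> 'M[R]_n).

Lemma F_iP x i g y : 0 <= phi i y ->
  0 <= phi i x + dot g (y - x) ->
  2^-1 * qform (H i) (y - x) <= phi i x + dot g (y - x) ->
  F_i phi H x i g y.
Proof. by move=> y0 lin quad; split=> [_ | ]; [| split=> _ _]. Qed.

Lemma near_ray_F_i x i g w :
  {for x, continuous (phi i)} -> subdiff (phi i) x g ->
  0 < phi i x \/ (phi i x = 0 /\ 0 < dot g w) ->
  \forall a \near 0^'+, F_i phi H x i g (x + a *: w).
Proof.
move=> phix gx hx.
have phi_ray : \forall a \near 0^'+, 0 <= phi i (x + a *: w).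
  case: hx => [px | [px gw]].
    by apply: filterS (near_ray_gt_cont w phix px) => a /ltW.
  have [l [fl gl]] := gx w.
  by apply: filterS (near_ray_gt_dirder fl (lt_le_trans gw gl)) => a; rewrite px => /ltW.
have ray a : x + a *: w - x = a *: w by rewrite addrC addKr.
near=> a; apply: F_iP; rewrite ?ray ?dotZr ?qformZ.
- by near: a.
- have : a ^+ 2 * 0 <= phi i x + a * dot g w by near: a; exact: near0_quadratic_le.
  by rewrite mulr0.
- by rewrite mulrCA; near: a; exact: near0_quadratic_le.
Unshelve. all: by end_near. Qed.

Lemma DF_active_dot_gt0 x vs u i d eps l :
  DF phi x vs i d -> phi i x = 0 -> dirder_is (phi i) x u l -> l < 0 -> 0 < eps ->
  0 < dot d (vs - eps *: u).
Proof.
move=> [dx hcase] px ul l0 eps0.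
have dvs : 0 <= dot d vs by case: hcase => [|[[_ //]|[]]]; rewrite px ltxx.
have du : 0 < eps * - dot d u.
  by rewrite mulr_gt0 // oppr_gt0 (le_lt_trans (subdiff_dot_le dx ul)).
by rewrite dotBr dotZr; lra.
Qed.

End ConvexFeasibleSet.

Theorem proposition4p3 (R : realType) (n N : nat)
    (J : 'rV[R]_n -> R) (phi : 'I_N -> 'rV[R]_n -> R) (H : 'I_N -> 'M[R]_n)
    (xs vs : 'rV[R]_n) (ghat : 'I_N -> 'rV[R]_n) :
  (* (i) J smooth, strictly convex, nonnegative *)
  smooth J -> strictly_convex_fun J -> (forall x, 0 <= J x) ->
  (* (ii) Gamma connected, closed, locally contains full-dim convex polytopes *)
  connected (Gamma phi) -> closed (Gamma phi) ->
  (forall x, Gamma phi x -> exists s : seq 'rV[R]_n,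
      polytope s x /\ polytope s `<=` Gamma phi /\ interior (polytope s) !=set0) ->
  (* semi-convex decomposition *)
  (forall i, bdry (Gamma_i phi i) = [set x | phi i x = 0]) ->
  (forall i, piecewise_smooth (phi i)) ->
  (forall i, semi_convex_with (phi i) (H i)) ->
  (* assumptions (1)-(3) *)
  (forall i x, subdiff (phi i) x <> [set 0]) ->
  (forall i x, phi i x = 0 -> ~ subdiff (phi i) x 0) ->
  (forall x, (exists i, phi i x = 0) ->
     exists v, forall i, phi i x = 0 ->
       exists2 l, dirder_is (phi i) x v l & l < 0) ->
  (* xs in Gamma, with optimal direction v* and optimal sub-gradients at xs *)
  Gamma phi xs ->
  is_vstar phi J xs vs ->
  (forall i, is_opt_subgrad phi J xs vs i (ghat i)) ->
  (* fixed point: xs = argmin of J over F(xs) *)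
  Fset phi H xs ghat xs ->
  (forall x, Fset phi H xs ghat x -> J xs <= J x) ->
  (* conclusion: strong local optimum *)
  forall v, feasible_dirs phi xs v -> 0 <= dot (grad J xs) v.
Proof.
move=> smoothJ _ _ _ _ _ _ psmooth _ _ _ descent_dir Gxs [_ [vs_min _]] ghat_opt _
  xs_min v Cv.
rewrite leNgt; apply/negP => gv.
have gvs : dot (grad J xs) vs < 0 := le_lt_trans (vs_min v Cv) gv.
have [u u_descent] : exists u, forall i, phi i xs = 0 ->
    exists2 l, dirder_is (phi i) xs u l & l < 0.
  have [/descent_dir // | none_active] := pselect (exists i, phi i xs = 0).
  by exists 0 => i xi; case: none_active; exists i.
have [eps eps0 gw] := exists_dot_perturb_lt0 u gvs.
have Fray i : \forall a \near 0^'+,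
    F_i phi H xs i (ghat i) (xs + a *: (vs - eps *: u)).
  have [DFi _] := ghat_opt i.
  apply: near_ray_F_i; [exact: (psmooth i).1 | exact: DFi.1 |].
  have : 0 <= phi i xs := Gxs i I.
  rewrite le_eqVlt => /orP[/eqP/esym active | ]; last by left.
  have [l ul l0] := u_descent i active.
  by right; split => //; exact: DF_active_dot_gt0 DFi active ul l0 eps0.
have [a [Ja Fa]] := filter_ex (filterI
  (near_ray_lt_grad ((smoothJ 1%N).1 xs) gw) (filter_forall _ Fray)).
by have := xs_min _ (fun i _ => Fa i); rewrite leNgt Ja.
Qed.
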